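(* Let $T\in V$ be a target variable. If $\Upsilon$ is conservative, then the set $cpc(T)$ output by the MIPC procedure on input $D_1,\dots,D_n$ and $T$ contains all parents and children of $T$ in $G$, i.e. $pa(T)\cup ch(T)\subseteq cpc(T)$.
   Context: Let $G=(V,E)$ be a DAG (causal Bayesian network) over a finite set $V$ of random variables with joint distribution $P$ satisfying the Markov condition with respect to $G$; causal sufficiency is assumed. $pa(T)$ and $ch(T)$ are the parents and children of $T$ in $G$. There are $n\ge 1$ intervention experiments; in the $i$-th, the set $\Upsilon_i\subseteq V$ (possibly empty) is manipulated, and $\Upsilon=\{\Upsilon_1,\dots,\Upsilon_n\}$ (unknown to the procedure). The post-intervention DAG is $G_i=(V,E_i)$ with $E_i=\{(a,b)\in E: b\notin\Upsilon_i\}$, with distribution $P_i(V)=\prod_{V_j\notin\Upsilon_i}P(V_j\mid pa(V_j))\prod_{V_j\in\Upsilon_i}P_i(V_j)$, and $D_i$ is a dataset drawn from $P_i$. It is assumed that each $P_i$ is faithful to $G_i$ and that conditional independence tests on $D_i$ are reliable, i.e. ''$X\perp T\mid S$ in $D_i$'' holds exactly when it holds in $P_i$. $\Upsilon$ is conservative if for every $V_j\in\bigcup_i\Upsilon_i$ there exists $i$ with $V_j\notin\Upsilon_i$. The MIPC procedure: Phase 1. Initialize $cpc(T)=\emptyset$, $cmb_i(T)=\emptyset$ for all $i$, $ipc(T)=\emptyset$. For each $V_j\in V\setminus\{T\}$ and each $i$, if $V_j$ and $T$ are (marginally) dependent in $D_i$, add $V_j$ to $cpc(T)$ and to $cmb_i(T)$.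 Phase 2. Process the variables $V_j\in cpc(T)$ one at a time. If there exist a nonempty $S\subseteq ipc(T)$ and an index $k$ with $V_j\in cmb_k(T)$, $S\subseteq cmb_k(T)$ and $T\perp V_j\mid S$ in $D_k$, then remove $V_j$ from every $cmb_i(T)$ and proceed to the next variable. Otherwise add $V_j$ to $ipc(T)$, and then for each $Y\in ipc(T)\setminus\{V_j\}$: if there exist a nonempty $S\subseteq ipc(T)\setminus\{Y\}$ and an index $k$ with $Y\in cmb_k(T)$, $S\subseteq cmb_k(T)$ and $T\perp Y\mid S$ in $D_k$, remove $Y$ from $ipc(T)$ and from every $cmb_h(T)$ containing it. After all variables of $cpc(T)$ have been processed, the procedure sets and outputs $cpc(T)=ipc(T)$. *)

From HB Require Import structures.
From mathcomp Require Import all_boot all_order all_algebra.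

Set Implicit Arguments.
Unset Strict Implicit.
Unset Printing Implicit Defensive.

Import Order.TTheory GRing.Theory Num.Theory.

(* Variables form a finite type V; each variable v takes
   values in a finite type Dom v.  A DAG is an edge relation G : rel V
   (G a b  means a -> b). *)

Section Graph.
Variable V : finType.

Definition dag (G : rel V) : Prop := forall x y, G x y -> ~~ connect G y x.

Definition pa (G : rel V) (v : V) : {set V} := [set w | G w v].
Definition ch (G : rel V) (v : V) : {set V} := [set w | G v w].

Definition mutilate (G : rel V) (U : {set V}) : rel V :=
  fun a b => G a b && (b \notin U).

Definition adjb (G : rel V) : rel V := fun a b => G a b || G b a.

(* condition on an interior node w of a path with neighbours a, b *)
Definition triple_ok (G : rel V) (S : {set V}) (a w b : V) : bool :=
  if G a w && G b w then [exists z in S, connect G w z] else w \notin S.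

Definition active (G : rel V) (S : {set V}) (x : V) (p : seq V) : bool :=
  let q := x :: p in
  all (fun i => triple_ok G S (nth x q i.-1) (nth x q i) (nth x q i.+1))
      (iota 1 (size p).-1).

Definition dconnected (G : rel V) (S : {set V}) (x y : V) : Prop :=
  exists p : seq V,
    [&& path (adjb G) x p, last x p == y, uniq (x :: p) & active G S x p].

Definition dsep (G : rel V) (A B S : {set V}) : Prop :=
  forall a b, a \in A -> b \in B -> ~ dconnected G S a b.

End Graph.

Local Open Scope ring_scope.
Section Prob.
Variables (R : realFieldType) (V : finType) (Dom : V -> finType).

Definition asg := {dffun forall v : V, Dom v}.

Definition agree (A : {set V}) (x y : asg) : bool := [forall v in A, x v == y v].

Definition marg (P : asg -> R) (A : {set V}) (x : asg) : R :=
  \sum_(y : asg | agree A x y) P y.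

Definition is_distr (P : asg -> R) : Prop :=
  (forall x, 0 <= P x) /\ \sum_(x : asg) P x = 1.

Definition is_distr_on (v : V) (q : Dom v -> R) : Prop :=
  (forall a, 0 <= q a) /\ \sum_(a : Dom v) q a = 1.

Definition cindep (P : asg -> R) (A B S : {set V}) : bool :=
  [forall x : asg, marg P (A :|: B :|: S) x * marg P S x
                   == marg P (A :|: S) x * marg P (B :|: S) x].

Definition markov (G : rel V) (P : asg -> R) : Prop :=
  forall v, cindep P [set v] ([set w | ~~ connect G v w] :\: pa G v) (pa G v).

Definition cond (G : rel V) (P : asg -> R) (v : V) (x : asg) : R :=
  marg P (v |: pa G v) x / marg P (pa G v) x.

(* truncated factorisation: distribution after manipulating U with
   distributions Q v for v in U *)
Definition post_intervention (G : rel V) (P : asg -> R) (U : {set V})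
    (Q : forall v : V, Dom v -> R) : asg -> R :=
  fun x => (\prod_(v | v \notin U) cond G P v x) * \prod_(v in U) Q v (x v).

Definition faithful (G : rel V) (P : asg -> R) : Prop :=
  forall A B S : {set V}, [disjoint A & B] -> [disjoint A & S] ->
    [disjoint B & S] -> (cindep P A B S <-> dsep G A B S).

End Prob.
Local Close Scope ring_scope.

Definition conservative (V : finType) (n : nat) (Ups : 'I_n -> {set V}) : Prop :=
  forall v, (exists i, v \in Ups i) -> exists i, v \notin Ups i.

Section MIPC.
Variables (V : finType) (n : nat).
(* ci i X Y S : result of the CI test "X _||_ Y | S" on dataset D_i *)
Variable ci : 'I_n -> V -> V -> {set V} -> bool.
Variable T : V.

Definition state := ({set V} * {ffun 'I_n -> {set V}})%type.

Definition cmb0 : {ffun 'I_n -> {set V}} :=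
  [ffun i => [set v | (v != T) && ~~ ci i v T set0]].
Definition cpc0 : {set V} := \bigcup_(i < n) cmb0 i.

Definition removable (st : state) (Y : V) (base : {set V}) : bool :=
  [exists k : 'I_n, [exists S : {set V},
     [&& S != set0, S \subset base, Y \in st.2 k, S \subset st.2 k
       & ci k T Y S]]].

Definition drop_var (st : state) (Y : V) : state :=
  (st.1 :\ Y, [ffun h => st.2 h :\ Y]).

Definition inner_step (st : state) (Y : V) : state :=
  if removable st Y (st.1 :\ Y) then drop_var st Y else st.

Definition outer_step (tau : V -> seq V) (st : state) (Vj : V) : state :=
  if removable st Vj st.1 then (st.1, [ffun i => st.2 i :\ Vj])
  else let st1 : state := (Vj |: st.1, st.2) in
       foldl inner_step st1 [seq Y <- tau Vj | Y \in st1.1 :\ Vj].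

(* output cpc(T) = final ipc(T); sigma is the processing order of cpc0 *)
Definition mipc (sigma : seq V) (tau : V -> seq V) : {set V} :=
  (foldl (outer_step tau) ((set0 : {set V}), cmb0) sigma).1.

End MIPC.

From HB Require Import structures.
From mathcomp Require Import all_boot all_order all_algebra.

Set Implicit Arguments.
Unset Strict Implicit.
Unset Printing Implicit Defensive.

Import GRing.Theory.

(* A parent or child X of T keeps its edge to T in some post-intervention
   graph G_i, because conservativeness leaves the head of that edge
   unmanipulated in some experiment; there X and T are dependent, so X enters
   cpc(T).  Moreover X is in cmb_k(T) only if the edge survives in G_k: if it
   was cut, its head has no parents in G_k, every collider-free path leaving a
   parentless node is directed, and acyclicity of G then d-separates X and T
   given the empty set.  Adjacent variables are dependent given every set, and
   the sets cmb_k(T) only shrink, so no removal test of Phase 2 ever fires on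
   X. *)

Section DConnection.
Variables (V : finType) (H : rel V).
Implicit Types (S : {set V}) (x y z : V) (p : seq V).

Lemma active_cons2 S x y z p :
  active H S x [:: y, z & p] = triple_ok H S x y z && active H S y (z :: p).
Proof.
rewrite /active /= -[2]/(1 + 1) iotaDl all_map; congr (_ && _).
apply: eq_in_all => -[|i]; rewrite mem_iota // add1n ltnS => /andP[_ ip] /=.
have ip1 : i < size (z :: p) by apply: ltnW.
have ip2 : i < size [:: y, z & p] by rewrite ltnW // ltnW.
by rewrite (set_nth_default y x ip2) (set_nth_default y x ip1)
           (set_nth_default y x ip).
Qed.

Lemma dconnected_adjb S x y : x != y -> adjb H x y -> dconnected H S x y.
Proof. by move=> xy adj; exists [:: y]; rewrite /= adj eqxx inE xy. Qed.

(* Given the empty set every interior node must be a non-collider, so an edge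
   pointing forward forces the next one to point forward too. *)
Lemma active0_path x y p :
  path (adjb H) x (y :: p) -> active H set0 x (y :: p) -> H x y ->
  path H x (y :: p).
Proof.
elim: p x y => [|z p IHp] x y /=; first by move=> _ _ ->.
case/andP=> _ adj_p; rewrite active_cons2 => /andP[ok act] Hxy.
rewrite Hxy; apply: IHp => //; case/andP: adj_p => /orP[// | Hzy] _.
by move: ok; rewrite /triple_ok Hxy Hzy => /existsP[w]; rewrite in_set0.
Qed.

Lemma parentless_not_dconnected0 x y :
  (forall z, ~~ H z x) -> ~~ connect H x y -> ~ dconnected H set0 x y.
Proof.
move=> no_pa + [p /and4P[adj_p /eqP lp _ act]].
rewrite -lp; case: p adj_p act {lp} => [|z p] adj_p act; first by rewrite connect0.
have Hxz : H x z by case/andP: adj_p => /orP[// | Hzx]; rewrite (negbTE (no_pa z)) in Hzx.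
have /path_connect/(_ (last x (z :: p))) : path H x (z :: p) by apply: active0_path.
by rewrite mem_last => /(_ isT) ->.
Qed.

End DConnection.

Lemma connect_mutilate (V : finType) (G : rel V) (U : {set V}) :
  subrel (connect (mutilate G U)) (connect G).
Proof. by apply: connect_sub => x y /andP[Gxy _]; apply: connect1. Qed.

Lemma dag_neq (V : finType) (G : rel V) x y : dag G -> G x y -> x != y.
Proof. by move=> dagG /dagG; apply: contraNneq => ->; rewrite connect0. Qed.

Lemma dag_adjb_neq (V : finType) (G : rel V) x y : dag G -> adjb G x y -> x != y.
Proof. by move=> dagG /orP[/(dag_neq dagG) | /(dag_neq dagG)]; rewrite // eq_sym. Qed.

Section Faithfulness.
Variables (R : realFieldType) (V : finType) (Dom : V -> finType).
Implicit Types (P : asg Dom -> R) (G H : rel V) (U S : {set V}).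

Lemma cindep_sym P (A B S : {set V}) : cindep P A B S = cindep P B A S.
Proof.
by apply: eq_forallb => x; rewrite [A :|: B]setUC [X in _ == X]mulrC.
Qed.

Lemma faithful_cindep1 H P S x y :
  faithful H P -> x != y -> x \notin S -> y \notin S ->
  cindep P [set x] [set y] S <-> ~ dconnected H S x y.
Proof.
move=> fP xy xS yS; have := fP [set x] [set y] S.
rewrite !disjoints1 !inE xy xS yS => /(_ isT isT isT) [to_sep of_sep].
split=> [/to_sep sep | nconn]; first by apply: sep; rewrite inE.
by apply: of_sep => a b /set1P-> /set1P->.
Qed.

Lemma cindep_adjb H P S x y :
  faithful H P -> x != y -> x \notin S -> y \notin S -> adjb H x y ->
  ~~ cindep P [set x] [set y] S.
Proof.
move=> fP xy xS yS adj; apply/negP => /(faithful_cindep1 fP xy xS yS); apply.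
exact: dconnected_adjb.
Qed.

(* The head y of the cut edge x -> y has no parents in the mutilated graph,
   and by acyclicity it does not reach x. *)
Lemma cindep0_cut_edge G U P x y :
  dag G -> faithful (mutilate G U) P -> adjb G x y ->
  ~~ adjb (mutilate G U) x y -> cindep P [set x] [set y] set0.
Proof.
wlog Gxy : x y / G x y.
  move=> wlog dagG fP adj cut; case/orP: (adj) => [Gxy | Gyx]; first exact: wlog.
  by rewrite cindep_sym; apply: wlog; rewrite // /adjb orbC.
move=> dagG fP _ cut.
have yU : y \in U by apply: contraR cut => yU; rewrite /adjb /mutilate Gxy yU.
have yx : y != x by rewrite eq_sym (dag_neq dagG Gxy).
rewrite cindep_sym.
apply/(faithful_cindep1 fP yx (negbT (in_set0 y)) (negbT (in_set0 x))).
apply: parentless_not_dconnected0 => [z | ]; first by rewrite /mutilate yU andbF.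
by apply: contra (dagG _ _ Gxy); apply: connect_mutilate.
Qed.

Lemma cindep0_mutilateE G U P x y :
  dag G -> faithful (mutilate G U) P -> adjb G x y ->
  cindep P [set x] [set y] set0 = ~~ adjb (mutilate G U) x y.
Proof.
move=> dagG fP adj; have xy := dag_adjb_neq dagG adj.
case: (boolP (adjb _ x y)) => [adjU | cut]; last exact: cindep0_cut_edge cut.
by apply/negbTE/(cindep_adjb fP xy); rewrite ?inE.
Qed.

End Faithfulness.

Section Conservative.
Variables (V : finType) (n : nat) (Ups : 'I_n -> {set V}).
Hypotheses (n_gt0 : 0 < n) (consUps : conservative Ups).

Lemma exists_unmanipulated v : exists i, v \notin Ups i.
Proof.
case: (boolP [exists i, v \in Ups i]) => [/existsP[i vi] | /existsPn none].
  exact: consUps (ex_intro _ i vi).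
by exists (Ordinal n_gt0).
Qed.

Lemma exists_adjb_mutilate (G : rel V) x y :
  adjb G x y -> exists i, adjb (mutilate G (Ups i)) x y.
Proof.
case/orP=> [Gxy | Gyx].
  by have [i yi] := exists_unmanipulated y; exists i; rewrite /adjb /mutilate Gxy yi.
by have [i xi] := exists_unmanipulated x; exists i; rewrite /adjb /mutilate Gyx xi orbT.
Qed.

End Conservative.

Section MIPCInvariant.
Variables (V : finType) (n : nat) (ci : 'I_n -> V -> V -> {set V} -> bool).
Variables (T : V) (tau : V -> seq V).
Implicit Types (st : state V n) (Y Vj : V) (base : {set V}).

Definition below_cmb0 st := forall k, st.2 k \subset cmb0 ci T k.

Lemma below_cmb0_drop st Y :
  below_cmb0 st -> below_cmb0 (st.1, [ffun h => st.2 h :\ Y]).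
Proof. by move=> sub k; rewrite ffunE (subset_trans (subD1set _ _)). Qed.

Lemma below_cmb0_inner_step st Y : below_cmb0 st -> below_cmb0 (inner_step ci T st Y).
Proof. by rewrite /inner_step; case: ifP => // _; apply: below_cmb0_drop. Qed.

Lemma below_cmb0_foldl_inner st s :
  below_cmb0 st -> below_cmb0 (foldl (inner_step ci T) st s).
Proof. by elim: s st => //= Y s IHs st sub; apply/IHs/below_cmb0_inner_step. Qed.

Lemma below_cmb0_outer_step st Vj :
  below_cmb0 st -> below_cmb0 (outer_step ci T tau st Vj).
Proof.
rewrite /outer_step; case: ifP => _ sub; first exact: below_cmb0_drop.
exact: below_cmb0_foldl_inner.
Qed.

Lemma T_notin_cmb0 k : T \notin cmb0 ci T k.
Proof. by rewrite ffunE inE eqxx. Qed.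

Variable X : V.
Hypothesis X_inseparable : forall k (S : {set V}),
  X \in cmb0 ci T k -> S \subset cmb0 ci T k -> X \notin S -> ~~ ci k T X S.

Lemma X_not_removable st base : below_cmb0 st -> X \notin base -> ~~ removable ci T st X base.
Proof.
move=> sub Xb; apply/existsPn => k; apply/existsPn => S.
apply/negP => /and5P[_ Sb Xk Sk]; apply/negP/X_inseparable.
- exact: subsetP (sub k) X Xk.
- exact: subset_trans Sk (sub k).
- by apply: contra Xb; apply: subsetP.
Qed.

Lemma X_in_foldl_inner st s :
  below_cmb0 st -> X \in st.1 -> X \in (foldl (inner_step ci T) st s).1.
Proof.
elim: s st => //= Y s IHs st sub Xst; apply: IHs; first exact: below_cmb0_inner_step.
rewrite /inner_step; case: ifPn => // rem; rewrite !inE Xst andbT.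
by apply: contraTneq rem => <-; rewrite X_not_removable // setD11.
Qed.

Lemma X_in_outer_step st Vj :
  below_cmb0 st -> X \in st.1 \/ X = Vj -> X \in (outer_step ci T tau st Vj).1.
Proof.
move=> sub XVj; rewrite /outer_step; case: ifPn => rem.
  case: XVj => [// | eXVj]; apply: contraTT rem => Xst.
  by rewrite -eXVj X_not_removable.
apply: X_in_foldl_inner => //=; rewrite !inE.
by case: XVj => [-> | ->]; rewrite ?eqxx ?orbT.
Qed.

Lemma X_in_foldl_outer st s :
  below_cmb0 st -> X \in st.1 \/ X \in s -> X \in (foldl (outer_step ci T tau) st s).1.
Proof.
elim: s st => [|Vj s IHs] st sub /= XVs; first by case: XVs.
apply: IHs; first exact: below_cmb0_outer_step.
case: XVs => [Xst | ]; first by left; apply: X_in_outer_step => //; left.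
rewrite inE => /orP[/eqP eXVj | Xs]; last by right.
by left; apply: X_in_outer_step => //; right.
Qed.

Lemma X_in_mipc sigma : X \in sigma -> X \in mipc ci T sigma tau.
Proof. by move=> Xs; apply: X_in_foldl_outer; [move=> k; rewrite ffunE | right]. Qed.

End MIPCInvariant.

Theorem theorem13 (R : realFieldType) (V : finType) (Dom : V -> finType)
  (G : rel V) (P : asg Dom -> R) (n : nat) (Ups : 'I_n -> {set V})
  (Q : 'I_n -> forall v : V, Dom v -> R)
  (ci : 'I_n -> V -> V -> {set V} -> bool) (T : V)
  (sigma : seq V) (tau : V -> seq V) :
  dag G ->
  is_distr P ->
  markov G P ->
  (0 < n)%N ->
  (forall i v, v \in Ups i -> is_distr_on (Q i v)) ->
  (forall i, faithful (mutilate G (Ups i)) (post_intervention G P (Ups i) (Q i))) ->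
  (forall i X Y S,
     ci i X Y S = cindep (post_intervention G P (Ups i) (Q i)) [set X] [set Y] S) ->
  conservative Ups ->
  perm_eq sigma (enum (cpc0 ci T)) ->
  (forall v, perm_eq (tau v) (enum V)) ->
  pa G T :|: ch G T \subset mipc ci T sigma tau.
Proof.
move=> dagG _ _ n_gt0 _ faith ciE consUps sigmaE _.
apply/subsetP => X XpaT; have adjXT : adjb G X T by rewrite !inE in XpaT.
have XT := dag_adjb_neq dagG adjXT.
have cmb0E k : (X \in cmb0 ci T k) = adjb (mutilate G (Ups k)) X T.
  by rewrite /cmb0 ffunE inE XT ciE (cindep0_mutilateE dagG (faith k) adjXT) negbK.
apply: X_in_mipc => [k S | ].
  rewrite cmb0E ciE => adjk ScT XS; apply: cindep_adjb (faith k) _ _ XS _.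
  - by rewrite eq_sym.
  - by apply: contra (T_notin_cmb0 ci T k); apply: subsetP.
  - by rewrite /adjb orbC.
have [i adji] := exists_adjb_mutilate n_gt0 consUps adjXT.
by rewrite (perm_mem sigmaE) mem_enum; apply/bigcupP; exists i; rewrite ?cmb0E.
Qed.
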